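(* Let $n$ be a power of $2$ and consider the non-local hidden matching game on $n$. Its classical value $\omega_c$ (the maximum winning probability achievable by classical, i.e. local deterministic or shared-randomness, strategies) satisfies $$\omega_c \leq \frac{1}{2} + \frac{8\sqrt{n}\,\log n}{n-1}.$$
   Context: Let $n$ be a power of $2$, let $[n]$ be identified with $\{0,1\}^{\log n}$ (so that indices $i,j \in [n]$ are viewed as $\log n$-bit strings), and let $M_n$ be the set of all perfect matchings on $[n]$. In the non-local hidden matching game, Alice receives $x \in \{0,1\}^n$ and Bob receives $M \in M_n$, both uniformly distributed and independent. Alice outputs $a \in \{0,1\}^{\log n}$; Bob outputs an edge $(i,j) \in M$ and a string $b \in \{0,1\}^{\log n}$. They win iff $(a \oplus b)\cdot(i \oplus j) = x_i \oplus x_j$, where $\cdot$ is the inner product modulo $2$ and $\oplus$ is bitwise XOR. $\log$ denotes the base-$2$ logarithm. *)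

From mathcomp Require Import all_boot all_order all_algebra.
Set Implicit Arguments. Unset Strict Implicit. Unset Printing Implicit Defensive.
Import Order.TTheory GRing.Theory Num.Theory.
Local Open Scope ring_scope.

(* [n] with n = 2^k, identified with k-bit strings *)
Definition bits (k : nat) := {ffun 'I_k -> bool}.

Definition bxor k (u v : bits k) : bits k := [ffun t => u t (+) v t].

Definition bdot k (u v : bits k) : bool := \big[addb/false]_(t < k) (u t && v t).

Definition input k := {ffun bits k -> bool}.

(* A perfect matching on [n], encoded as the partner map M :
   the edges are the pairs {i, M i}; M is a fixed-point-free involution. *)
Definition is_pmatching k (M : {ffun bits k -> bits k}) : bool :=
  [forall i, (M (M i) == i) && (M i != i)].

Definition hm_win k (x : input k) (a : bits k) (ij : bits k * bits k) (b : bits k)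
  : bool :=
  bdot (bxor a b) (bxor ij.1 ij.2) == (x ij.1 (+) x ij.2).

Definition bob_valid k (Rnd : Type)
  (B : Rnd -> {ffun bits k -> bits k} -> (bits k * bits k) * bits k) : Prop :=
  forall r M, is_pmatching M -> M (B r M).1.1 = (B r M).1.2.

Definition hm_winprob (R : numFieldType) k (Rnd : finType) (p : Rnd -> R)
  (A : Rnd -> input k -> bits k)
  (B : Rnd -> {ffun bits k -> bits k} -> (bits k * bits k) * bits k) : R :=
  \sum_(r : Rnd) p r *
    ((\sum_(x : input k) \sum_(M : {ffun bits k -> bits k} | is_pmatching M)
        (hm_win x (A r x) (B r M).1 (B r M).2)%:R)
     / (#|{: input k}| * #|[pred M : {ffun bits k -> bits k} | is_pmatching M]|)%:R).

(* For fixed shared randomness both players are deterministic.  Shift Alice's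
   input by the parities of her answer, y = x + (a(x).t)_t; then Bob's answer
   (i, j, b) wins iff (-1)^(b.(i+j)) (-1)^(y_i) (-1)^(y_j) = 1, so the advantage
   over 1/2 is the quadratic form sum_ij U_ij (-1)^(y_i + y_j), where U_ij counts
   with signs the matchings on which Bob answers the edge (i, j).  Since Bob's
   edge lies in his matching and matchings are symmetric under transpositions,
   sum |U_ij| <= |M_n| and |U_ij| <= |M_n| / (n - 1), so sum U_ij^2 <= |M_n|^2 / (n - 1).
   Each pair i <> j is separated by exactly half of the cuts {i | c.i = 1}, so
   averaging over c turns the form into bilinear forms; two applications of
   Khintchine's inequality bound their 2k-th moments by (4k)^(2k) (2 sum U_ij^2)^k.
   Alice's shift takes only n = 2^k values, which costs a factor n in the 2k-th
   moment, i.e. only a factor sqrt 2 in the first moment. *)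

From mathcomp Require Import all_boot all_order all_algebra all_fingroup.
From mathcomp Require Import ring lra zify.
Set Implicit Arguments. Unset Strict Implicit. Unset Printing Implicit Defensive.
Import Order.TTheory GRing.Theory Num.Theory.
Local Open Scope ring_scope.

Local Notation cube I := {ffun I -> bool}.

Section BooleanCube.
Variable I : finType.
Implicit Types (x h : cube I) (j : I).

Definition xorf (u v : cube I) : cube I := [ffun i => u i (+) v i].

Definition unitv j : cube I := [ffun i => i == j].

Lemma xorfK h : involutive (xorf^~ h).
Proof. by move=> x; apply/ffunP=> i; rewrite !ffunE addbK. Qed.

Lemma sum_xorf (R : nmodType) h (F : cube I -> R) :
  \sum_x F (xorf x h) = \sum_x F x.
Proof. by rewrite [RHS](reindex_inj (inv_inj (@xorfK h))). Qed.

Lemma xorf_unitv x j i : xorf x (unitv j) i = x i (+) (i == j).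
Proof. by rewrite !ffunE. Qed.

Lemma sum_shift_le (R : numDomainType) (T : finType) (h : T -> cube I)
    (a : cube I -> T) (F : cube I -> R) :
  (forall x, 0 <= F x) -> \sum_x F (xorf x (h (a x))) <= #|T|%:R * \sum_x F x.
Proof.
move=> F0; apply: le_trans (_ : \sum_x \sum_t F (xorf x (h t)) <= _).
  by apply: ler_sum => x _; rewrite (bigD1 (a x)) //= lerDl sumr_ge0.
rewrite exchange_big /= (eq_bigr (fun _ => \sum_x F x)) ?sumr_const ?mulr_natl //.
by move=> t _; rewrite sum_xorf.
Qed.

Lemma ler_sum_involutive (R : numDomainType) (tau : cube I -> cube I)
    (F G : cube I -> R) :
  involutive tau -> (forall x, F x + F (tau x) <= G x + G (tau x)) ->
  \sum_x F x <= \sum_x G x.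
Proof.
move=> tauK FG; suff: (\sum_x F x) *+ 2 <= (\sum_x G x) *+ 2 by rewrite lerMn2r.
have sum_tau (H : cube I -> R) : \sum_x H x = \sum_x H (tau x).
  exact: reindex_inj (inv_inj tauK).
rewrite !mulr2n {2}(sum_tau F) {2}(sum_tau G) -!big_split; apply: ler_sum => x _; exact: FG.
Qed.

End BooleanCube.

Lemma sum_cut_sym (V : nmodType) (T : finType) (P : pred T) (F : T -> T -> V) :
  \sum_(j | P j) \sum_(i | ~~ P i) (F i j + F j i) = \sum_i \sum_j F i j *+ (P i != P j).
Proof.
have restrict (A B : pred T) (G : T -> T -> V) :
    \sum_i \sum_j G i j *+ (A i && B j) = \sum_(i | A i) \sum_(j | B j) G i j.
  rewrite [RHS]big_mkcond; apply: eq_bigr => i _; case: (A i) => /=.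
    by rewrite [RHS]big_mkcond; apply: eq_bigr => j _; case: (B j).
  by rewrite big1 // => j _; rewrite mulr0n.
rewrite (eq_bigr _ (fun j _ => big_split _ _ _ _ _)) big_split /=.
rewrite -(restrict P (fun i => ~~ P i) (fun i j => F j i)) -(restrict P (fun i => ~~ P i) F).
have swap : \sum_i \sum_j F j i *+ (P i && ~~ P j) = \sum_i \sum_j F i j *+ (P j && ~~ P i).
  exact: exchange_big.
rewrite swap -big_split /=; apply: eq_bigr => i _; rewrite -big_split /=; apply: eq_bigr => j _.
by rewrite -mulrnDr; case: (P i); case: (P j).
Qed.

Section OddPowerDifference.
Variable R : realDomainType.

Lemma mulXX_le_addX (u v : R) a b : ~~ odd (a + b) ->
  u ^+ a * v ^+ b <= u ^+ (a + b) + v ^+ (a + b).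
Proof.
move=> ev; have evenX (w : R) : w ^+ (a + b) = `|w| ^+ (a + b).
  rewrite -(odd_double_half (a + b)) (negbTE ev) -mul2n !exprM.
  by rewrite real_normK ?num_real.
apply: le_trans (ler_norm _) _; rewrite normrM !normrX (evenX u) (evenX v).
have [uv|vu] := leP `|u| `|v|.
- apply: le_trans (_ : `|v| ^+ a * `|v| ^+ b <= _).
    by apply: ler_wpM2r; [exact: exprn_ge0 | apply: lerXn2r; rewrite ?nnegrE].
  by rewrite -exprD lerDr exprn_ge0.
- apply: le_trans (_ : `|u| ^+ a * `|u| ^+ b <= _).
    by apply: ler_wpM2l; [exact: exprn_ge0 | apply: lerXn2r; rewrite ?nnegrE ?(ltW vu)].
  by rewrite -exprD lerDl exprn_ge0.
Qed.

Lemma mul_subrXX_le (u v : R) m :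
  (u - v) * (u ^+ (2 * m).+1 - v ^+ (2 * m).+1) <=
  (2 * m).+1%:R * (u - v) ^+ 2 * (u ^+ (2 * m) + v ^+ (2 * m)).
Proof.
rewrite subrXX mulrA -expr2 -mulrA mulrCA; apply: ler_wpM2l; first exact: sqr_ge0.
rewrite -[in X in _ <= X](card_ord (2 * m).+1) mulr_natl -sumr_const.
apply: ler_sum => i _; have i_le : (i <= 2 * m)%N by rewrite -ltnS.
by have := @mulXX_le_addX u v (2 * m - i) i; rewrite subnK // oddM; apply.
Qed.

End OddPowerDifference.

Section Khintchine.
Variables (R : realFieldType) (I : finType) (P : {pred I}).
Variable s : I -> cube I -> R.
Hypothesis s_toggle : forall j t x, t \in P -> s j (xorf x (unitv t)) = s j x.
Implicit Types (x : cube I) (g : cube I -> R).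

Definition rad_sum x := \sum_(j in P) (-1) ^+ x j * s j x.

Definition rad_var x := \sum_(j in P) s j x ^+ 2.

Lemma rad_sum_toggle j x : j \in P ->
  rad_sum (xorf x (unitv j)) = rad_sum x - 2 * ((-1) ^+ x j * s j x).
Proof.
move=> jP; rewrite /rad_sum (bigD1 j) //= [in RHS](bigD1 j) //= xorf_unitv eqxx.
rewrite addbT signrN s_toggle //.
rewrite (eq_bigr (fun i => (-1) ^+ x i * s i x)); first by ring.
by move=> i /andP[_ /negbTE ij]; rewrite xorf_unitv ij addbF s_toggle.
Qed.

Lemma rad_var_toggle t x : t \in P -> rad_var (xorf x (unitv t)) = rad_var x.
Proof. by move=> tP; apply: eq_bigr => j _; rewrite s_toggle. Qed.

Lemma rad_moment_step j m g : j \in P -> (forall x, 0 <= g x) ->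
    (forall t x, t \in P -> g (xorf x (unitv t)) = g x) ->
  \sum_(x : cube I) (-1) ^+ x j * s j x * rad_sum x ^+ (2 * m).+1 * g x <=
  \sum_(x : cube I) 2 * (2 * m).+1%:R * (s j x ^+ 2 * rad_sum x ^+ (2 * m) * g x).
Proof.
move=> jP g0 g_toggle; apply: ler_sum_involutive (xorfK (unitv j)) _ => x.
(* Toggling x_j flips the sign of the j-th term p and lowers rad_sum by 2 p. *)
rewrite rad_sum_toggle // g_toggle // s_toggle // xorf_unitv eqxx addbT signrN.
have sqr_s : s j x ^+ 2 = ((-1) ^+ x j * s j x) ^+ 2 by rewrite exprMn sqrr_sign mul1r.
rewrite sqr_s mulNr; set p := _ * s j x; set u := rad_sum x; set v := u - 2 * p.
have := mul_subrXX_le u v m; have -> : u - v = 2 * p by rewrite /v; ring.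
set N := (2 * m).+1%:R => key.
have -> : p * u ^+ (2 * m).+1 * g x + - p * v ^+ (2 * m).+1 * g x =
          (p * (u ^+ (2 * m).+1 - v ^+ (2 * m).+1)) * g x by ring.
have -> : 2 * N * (p ^+ 2 * u ^+ (2 * m) * g x) + 2 * N * (p ^+ 2 * v ^+ (2 * m) * g x) =
          (2 * N * (p ^+ 2 * (u ^+ (2 * m) + v ^+ (2 * m)))) * g x by ring.
apply: ler_wpM2r => //; lra.
Qed.

(* Each induction step costs a factor 2 (2 m + 1) <= 4 Q. *)
Lemma rad_moment_le Q m g : (m <= Q)%N -> (forall x, 0 <= g x) ->
    (forall t x, t \in P -> g (xorf x (unitv t)) = g x) ->
  \sum_(x : cube I) rad_sum x ^+ (2 * m) * g x <=
  (4 * Q)%:R ^+ m * \sum_(x : cube I) rad_var x ^+ m * g x.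
Proof.
elim: m g => [|m IH] g mQ g0 g_toggle.
  by rewrite mul1r; apply: ler_sum => x _; rewrite !expr0.
have expand x : rad_sum x ^+ (2 * m.+1) * g x =
    \sum_(j in P) (-1) ^+ x j * s j x * rad_sum x ^+ (2 * m).+1 * g x.
  by rewrite -!mulr_suml -/(rad_sum x) -exprS mulnS.
rewrite (eq_bigr _ (fun x _ => expand x)) exchange_big /=.
apply: le_trans (ler_sum _ (fun j jP => rad_moment_step m jP g0 g_toggle)) _.
set N := (2 * m).+1%:R; rewrite exchange_big /=.
have fold_var x : \sum_(j in P) 2 * N * (s j x ^+ 2 * rad_sum x ^+ (2 * m) * g x) =
    2 * N * (rad_sum x ^+ (2 * m) * (rad_var x * g x)).
  by rewrite -mulr_sumr -!mulr_suml -/(rad_var x); congr (_ * _); ring.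
rewrite (eq_bigr _ (fun x _ => fold_var x)) -mulr_sumr.
have V0 x : 0 <= rad_var x by apply: sumr_ge0 => j _; apply: sqr_ge0.
have Vg0 x : 0 <= rad_var x * g x by rewrite mulr_ge0.
have Vg_toggle t x : t \in P -> rad_var (xorf x (unitv t)) * g (xorf x (unitv t)) = rad_var x * g x.
  by move=> tP; rewrite rad_var_toggle ?g_toggle.
apply: le_trans (ler_wpM2l _ (IH _ (ltnW mQ) Vg0 Vg_toggle)) _; first by rewrite mulr_ge0.
have unfold_var x : rad_var x ^+ m.+1 * g x = rad_var x ^+ m * (rad_var x * g x).
  by rewrite exprSr mulrA.
rewrite (eq_bigr _ (fun x _ => unfold_var x)) exprS -mulrA.
apply: ler_wpM2r.
  by rewrite mulr_ge0 ?exprn_ge0 ?sumr_ge0 // => x _; rewrite mulr_ge0 ?exprn_ge0.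
by rewrite /N -natrM ler_nat; lia.
Qed.

Theorem khintchine m :
  \sum_(x : cube I) rad_sum x ^+ (2 * m) <= (4 * m)%:R ^+ m * \sum_(x : cube I) rad_var x ^+ m.
Proof.
have := @rad_moment_le m m (fun _ => 1) (leqnn m) (fun _ => ler01) (fun _ _ _ => erefl).
by rewrite !(eq_bigr _ (fun x _ => mulr1 _)).
Qed.

End Khintchine.

Section PowerMean.
Variables (R : realDomainType) (J : finType) (w z : J -> R).
Hypotheses (w_ge0 : forall j, 0 <= w j) (z_ge0 : forall j, 0 <= z j).

Lemma subrX_mul_subr_ge0 (a b : R) q : 0 <= a -> 0 <= b -> 0 <= (a ^+ q - b ^+ q) * (a - b).
Proof.
move=> a0 b0; have [ab|ba] := leP a b.
- rewrite -mulrNN !opprB; apply: mulr_ge0; rewrite subr_ge0 //.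
  by apply: lerXn2r; rewrite ?nnegrE.
- apply: mulr_ge0; rewrite subr_ge0 ?(ltW ba) //.
  by apply: lerXn2r; rewrite ?nnegrE ?(ltW ba).
Qed.

Lemma chebyshev_sum q : (\sum_j w j * z j ^+ q) * (\sum_j w j * z j) <=
                        (\sum_j w j) * (\sum_j w j * z j ^+ q.+1).
Proof.
pose D := \sum_i \sum_j w i * w j * z j ^+ q * (z j - z i).
have eD : (\sum_j w j) * (\sum_j w j * z j ^+ q.+1) -
          (\sum_j w j * z j ^+ q) * (\sum_j w j * z j) = D.
  rewrite [X in _ - X]mulrC !mulr_suml -sumrB; apply: eq_bigr => i _.
  rewrite !mulr_sumr -sumrB; apply: eq_bigr => j _; rewrite exprS; ring.
have eD' : D = \sum_i \sum_j w i * w j * z i ^+ q * (z i - z j).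
  by rewrite /D exchange_big; apply: eq_bigr => i _; apply: eq_bigr => j _; ring.
suff : 0 <= D + D by rewrite -eD; lra.
rewrite {1}eD' -big_split; apply: sumr_ge0 => i _; rewrite -big_split; apply: sumr_ge0 => j _ /=.
have -> : w i * w j * z i ^+ q * (z i - z j) + w i * w j * z j ^+ q * (z j - z i) =
          w i * w j * ((z i ^+ q - z j ^+ q) * (z i - z j)) by ring.
by apply: mulr_ge0; [exact: mulr_ge0 | exact: subrX_mul_subr_ge0].
Qed.

Lemma power_mean q : (\sum_j w j * z j) ^+ q.+1 <= (\sum_j w j) ^+ q * \sum_j w j * z j ^+ q.+1.
Proof.
elim: q => [|q IH]; first by rewrite !expr1 expr0 mul1r.
have s0 : 0 <= \sum_j w j * z j by apply: sumr_ge0 => j _; rewrite mulr_ge0.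
have W0 : 0 <= \sum_j w j by apply: sumr_ge0.
rewrite exprS mulrC; apply: le_trans (ler_wpM2r s0 IH) _.
by rewrite exprSr -!mulrA; apply: ler_wpM2l; [exact: exprn_ge0 | exact: chebyshev_sum].
Qed.

End PowerMean.

Lemma minkowski_moment (R : realFieldType) (J T : finType) (f : J -> T -> R) (S : J -> R)
    (C : R) k : (0 < k)%N -> (forall j x, 0 <= f j x) -> (forall j, 0 <= S j) ->
  (forall j, \sum_x f j x ^+ k <= C * S j ^+ k) ->
  \sum_x (\sum_j f j x) ^+ k <= C * (\sum_j S j) ^+ k.
Proof.
move=> k_gt0 f_ge0 S_ge0 fS.
pose z j x := f j x / S j.
have z_ge0 x j : 0 <= z j x by rewrite divr_ge0.
have f_eq0 j x : S j = 0 -> f j x = 0.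
  move=> Sj0; have := fS j; rewrite Sj0 expr0n gtn_eqF // mulr0 => sum_le0.
  have sum0 : \sum_x f j x ^+ k = 0.
    by apply/eqP; rewrite eq_le sum_le0 sumr_ge0 // => y _; rewrite exprn_ge0.
  have /eqP : f j x ^+ k = 0 by apply: (psumr_eq0P _ sum0) => // y _; rewrite exprn_ge0.
  by rewrite expf_eq0 k_gt0 => /eqP.
have fSz j x : f j x = S j * z j x.
  by have [Sj0|Sj0] := eqVneq (S j) 0; [rewrite f_eq0 // Sj0 mul0r | rewrite mulrC divfK].
have Sz_le j : S j * \sum_x z j x ^+ k <= C * S j.
  have [Sj0|Sj0] := eqVneq (S j) 0; first by rewrite Sj0 !mul0r mulr0.
  have Sj_gt0 : 0 < S j by rewrite lt_def Sj0 S_ge0.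
  rewrite (eq_bigr (fun x => f j x ^+ k / S j ^+ k)); last by move=> x _; rewrite expr_div_n.
  by rewrite -mulr_suml mulrC ler_pM2r // ler_pdivrMr ?exprn_gt0.
have pm x := power_mean (fun j => S_ge0 j) (fun j => z_ge0 x j) k.-1.
rewrite prednK // in pm.
apply: le_trans (_ : \sum_x (\sum_j S j) ^+ k.-1 * \sum_j S j * z j x ^+ k <= _).
  by apply: ler_sum => x _; rewrite (eq_bigr _ (fun j _ => fSz j x)); exact: pm.
rewrite -mulr_sumr exchange_big /=.
rewrite [X in _ * X](eq_bigr (fun j => S j * \sum_x z j x ^+ k)); last first.
  by move=> j _; rewrite mulr_sumr.
apply: le_trans (ler_wpM2l _ (ler_sum _ (fun j _ => Sz_le j))) _.
  by rewrite exprn_ge0 ?sumr_ge0.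
by rewrite -mulr_sumr mulrCA -exprSr prednK.
Qed.

Lemma sum_abs_expr_le (R : realDomainType) (T : finType) (f : T -> R) q :
  (\sum_x `|f x|) ^+ q.+1 <= #|T|%:R ^+ q * \sum_x `|f x| ^+ q.+1.
Proof.
have := power_mean (fun _ => ler01) (fun x => normr_ge0 (f x)) q.
by rewrite sumr_const !(eq_bigr _ (fun x _ => mul1r _)).
Qed.

Section InnerProduct.
Variable k : nat.
Implicit Types u v w : bits k.

Lemma bdot_xorl u v w : bdot (bxor u v) w = bdot u w (+) bdot v w.
Proof. by rewrite /bdot -big_split; apply: eq_bigr => t _; rewrite ffunE andb_addl. Qed.

Lemma bdotC u v : bdot u v = bdot v u.
Proof. by apply: eq_bigr => t _; rewrite andbC. Qed.

Lemma bdot_xorr u v w : bdot u (bxor v w) = bdot u v (+) bdot u w.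
Proof. by rewrite bdotC bdot_xorl !(bdotC u). Qed.

Lemma bdot_unitv t u : bdot (unitv t) u = u t.
Proof.
rewrite /bdot (bigD1 t) //= ffunE eqxx big1 ?addbF // => s /negbTE st.
by rewrite ffunE st.
Qed.

Lemma card_bits : #|{: bits k}| = (2 ^ k)%N.
Proof. by rewrite card_ffun card_bool card_ord. Qed.

Lemma card_bdot_neq i j : i != j ->
  (#|[set c : bits k | bdot c i != bdot c j]|.*2 = 2 ^ k)%N.
Proof.
move=> ij; have [t ijt] : exists t, bxor i j t.
  apply/existsP; apply: contraR ij; rewrite negb_exists => /forallP ij0.
  by apply/eqP/ffunP => t; move: (ij0 t); rewrite ffunE; case: (i t); case: (j t).
set A := [set c : bits k | bdot c i != bdot c j].
have toggle_A : (fun c => xorf c (unitv t)) @^-1: A = ~: A.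
  apply/setP => c; rewrite !inE !bdot_xorl !bdot_unitv.
  by move: ijt; rewrite ffunE; case: (i t); case: (j t); case: (bdot c i); case: (bdot c j).
rewrite -card_bits -(cardsC A) -addnn -toggle_A card_preimset //.
exact: inv_inj (xorfK _).
Qed.

End InnerProduct.

Section PerfectMatchings.
Variable k : nat.
Implicit Types (i j : bits k) (M : {ffun bits k -> bits k}).

Lemma is_pmatchingP M : reflect (forall i, M (M i) = i /\ M i <> i) (is_pmatching M).
Proof.
apply: (iffP forallP) => pmM i; first by case/andP: (pmM i) => /eqP -> /eqP.
by case: (pmM i) => /eqP -> /eqP ->.
Qed.

Definition pmatchings := [set M : {ffun bits k -> bits k} | is_pmatching M].

Definition pmatchings_at i j := [set M in pmatchings | M i == j].

Lemma card_pmatchings_at_le i j j' : j != i -> j' != i ->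
  (#|pmatchings_at i j| <= #|pmatchings_at i j'|)%N.
Proof.
move=> ji j'i; set t := tperm j j'.
pose conj M : {ffun bits k -> bits k} := [ffun x => t (M (t x))].
have conjK : involutive conj by move=> M; apply/ffunP=> x; rewrite !ffunE !tpermK.
rewrite -(card_imset _ (inv_inj conjK)); apply/subset_leq_card/subsetP => M' /imsetP[M].
rewrite !inE => /andP[/is_pmatchingP pmM /eqP Mi] ->.
rewrite ffunE (tpermD ji j'i) Mi tpermL eqxx andbT.
apply/is_pmatchingP => x; rewrite !ffunE tpermK.
have [-> Mtx] := pmM (t x); split=> [|Mx]; first exact: tpermK.
by apply: Mtx; rewrite -{2}Mx tpermK.
Qed.

Lemma card_pmatchings_at i j : j != i ->
  ((2 ^ k).-1 * #|pmatchings_at i j| = #|pmatchings|)%N.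
Proof.
move=> ji; have eq_at j' : j' != i -> #|pmatchings_at i j'| = #|pmatchings_at i j|.
  by move=> j'i; apply/eqP; rewrite eqn_leq !card_pmatchings_at_le.
have at_ii : pmatchings_at i i = set0.
  apply/setP => M; rewrite !inE; apply/negP => /andP[/is_pmatchingP pmM /eqP Mi].
  by case: (pmM i).
have -> : #|pmatchings| = (\sum_j' #|pmatchings_at i j'|)%N.
  rewrite -sum1_card (partition_big (fun M => M i) xpredT) //=.
  by apply: eq_bigr => j' _; rewrite -sum1_card; apply: eq_bigl => M; rewrite !inE.
rewrite (bigD1 i) //= at_ii cards0 add0n (eq_bigr _ (fun j' => eq_at j')).
by rewrite sum_nat_const cardC1 card_bits mulnC.
Qed.
End PerfectMatchings.

Definition parity k (a : bits k) : input k := [ffun t => bdot a t].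

Lemma hm_win_sign (R : numFieldType) k (x : input k) a (ij : bits k * bits k) b :
  let y := xorf x (parity a) in
  (hm_win x a ij b)%:R = 2^-1 * (1 + (-1) ^+ bdot b (bxor ij.1 ij.2) *
                                     ((-1) ^+ y ij.1 * (-1) ^+ y ij.2)) :> R.
Proof.
move=> y; have -> : hm_win x a ij b = ~~ (bdot b (bxor ij.1 ij.2) (+) (y ij.1 (+) y ij.2)).
  rewrite /hm_win /y !ffunE bdot_xorl !bdot_xorr.
  by case: (bdot a _); case: (bdot a _); case: (bdot b _); case: (bdot b _);
     case: (x _); case: (x _).
by rewrite -!signr_addb; case: (_ (+) _) => /=; field.
Qed.

Section DeterministicStrategy.
Variables (R : rcfType) (k : nat).
Variable bob : {ffun bits k -> bits k} -> (bits k * bits k) * bits k.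
Hypothesis bob_edge : forall M, is_pmatching M -> M (bob M).1.1 = (bob M).1.2.
Implicit Types (i j c : bits k) (x y : input k).

Local Notation sgn b := ((-1) ^+ b : R).

Lemma exp2_sub1_gt0 : (0 < k)%N -> 0 < (2 ^ k)%:R - 1 :> R.
Proof. by move=> k_gt0; rewrite subr_gt0 ltr1n -{1}(expn0 2) ltn_exp2l. Qed.

Definition edge_bias i j : R :=
  \sum_(M in pmatchings k | (bob M).1 == (i, j)) sgn (bdot (bob M).2 (bxor i j)).

Definition bias_form y : R := \sum_i \sum_j edge_bias i j * (sgn (y i) * sgn (y j)).

Lemma edge_bias_id i : edge_bias i i = 0.
Proof.
rewrite /edge_bias big1 // => M /andP[]; rewrite inE => /[dup] pmM /bob_edge Mi /eqP bobM.
by move: pmM Mi; rewrite bobM /= => /is_pmatchingP /(_ i) [].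
Qed.

Lemma abs_edge_bias_le i j : `|edge_bias i j| <= #|pmatchings_at i j|%:R.
Proof.
rewrite -sum1_card natr_sum; apply: le_trans (ler_norm_sum _ _ _) _.
rewrite big_mkcond [X in _ <= X]big_mkcond /=; apply: ler_sum => M _.
rewrite !inE; case: (boolP (is_pmatching M)) => //= pmM; case: eqP => //= bobM; last by case: ifP.
by have := bob_edge pmM; rewrite bobM /= => ->; rewrite eqxx normr_sign.
Qed.

Lemma sum_abs_edge_bias_le : \sum_i \sum_j `|edge_bias i j| <= #|pmatchings k|%:R.
Proof.
rewrite -sum1_card natr_sum (partition_big (fun M => (bob M).1) xpredT) //= pair_big /=.
apply: ler_sum => -[i j] _; apply: le_trans (ler_norm_sum _ _ _) _.
by apply: ler_sum => M _; rewrite normr_sign.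
Qed.

Lemma sum_sqr_edge_bias_le : (0 < k)%N ->
  \sum_i \sum_j edge_bias i j ^+ 2 <= #|pmatchings k|%:R ^+ 2 / ((2 ^ k)%:R - 1).
Proof.
move=> k_gt0; have n1_gt0 := exp2_sub1_gt0 k_gt0.
set b : R := #|pmatchings k|%:R / ((2 ^ k)%:R - 1).
have b_ge0 : 0 <= b by rewrite divr_ge0 ?ler0n ?ltW.
have bias_le i j : `|edge_bias i j| <= b.
  have [->|ji] := eqVneq j i; first by rewrite edge_bias_id normr0.
  rewrite ler_pdivlMr // -(card_pmatchings_at ji) natrM mulrC -subn1 natrB ?expn_gt0 //.
  by rewrite ler_pM2l // abs_edge_bias_le.
apply: le_trans (_ : \sum_i \sum_j `|edge_bias i j| * b <= _).
  apply: ler_sum => i _; apply: ler_sum => j _.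
  by rewrite -real_normK ?num_real // expr2; apply: ler_wpM2l.
rewrite (eq_bigr _ (fun i _ => esym (mulr_suml _ _ _ _))) -mulr_suml expr2 -mulrA.
by rewrite ler_wpM2r ?sum_abs_edge_bias_le.
Qed.

Lemma sum_hm_win x a :
  \sum_(M | is_pmatching M) (hm_win x a (bob M).1 (bob M).2)%:R =
  2^-1 * (#|pmatchings k|%:R + bias_form (xorf x (parity a))) :> R.
Proof.
rewrite (eq_bigr _ (fun M _ => hm_win_sign R x a (bob M).1 (bob M).2)) -mulr_sumr big_split /=.
congr (_ * (_ + _)); first by rewrite -sum1dep_card natr_sum.
rewrite /bias_form pair_big /= (partition_big (fun M => (bob M).1) xpredT) //=.
apply: eq_bigr => -[i j] _; rewrite /edge_bias mulr_suml.
by apply: eq_big => [M|M /andP[_ /eqP ->]]; rewrite ?inE.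
Qed.

Definition cut_coef c j : input k -> R :=
  rad_sum [pred i | ~~ bdot c i] (fun i _ => edge_bias i j + edge_bias j i).

Definition cut_form c : input k -> R := rad_sum [pred j | bdot c j] (cut_coef c).

Lemma cut_coef_toggle c j t x : t \in [pred j | bdot c j] ->
  cut_coef c j (xorf x (unitv t)) = cut_coef c j x.
Proof.
rewrite inE => ct; apply: eq_bigr => i; rewrite inE xorf_unitv.
by case: eqP => [-> /negbTE|]; rewrite ?ct ?addbF.
Qed.

Lemma cut_formE c y : cut_form c y =
  \sum_i \sum_j (edge_bias i j * (sgn (y i) * sgn (y j))) *+ (bdot c i != bdot c j).
Proof.
rewrite -sum_cut_sym /cut_form /rad_sum; apply: eq_bigr => j _.
rewrite /cut_coef /rad_sum mulr_sumr; apply: eq_bigr => i _.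
by move: (sgn (y i)) (sgn (y j)) => si sj; ring.
Qed.

Lemma sum_cut_form y : (\sum_c cut_form c y) *+ 2 = (2 ^ k)%:R * bias_form y.
Proof.
rewrite (eq_bigr _ (fun c _ => cut_formE c y)) exchange_big -sumrMnl mulr_sumr.
apply: eq_bigr => i _; rewrite exchange_big -sumrMnl mulr_sumr; apply: eq_bigr => j _.
have [->|ij] := eqVneq i j.
  by rewrite edge_bias_id !mul0r mulr0 big1 ?mul0rn // => c _; rewrite mul0rn.
rewrite sumrMnr -mulrnA mulr_natl -(card_bdot_neq ij) -sum1dep_card [in RHS]big_mkcond muln2.
by congr (_ *+ _.*2); apply: eq_bigr => c _; case: (_ != _).
Qed.

Definition cut_var c : R :=
  \sum_(j | bdot c j) \sum_(i | ~~ bdot c i) (edge_bias i j + edge_bias j i) ^+ 2.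

Lemma cut_var_le c : cut_var c <= 2 * \sum_i \sum_j edge_bias i j ^+ 2.
Proof.
apply: le_trans (_ : \sum_(j | bdot c j) \sum_(i | ~~ bdot c i)
    (2 * edge_bias i j ^+ 2 + 2 * edge_bias j i ^+ 2) <= _).
  apply: ler_sum => j _; apply: ler_sum => i _; set u := edge_bias i j; set v := edge_bias j i.
  by rewrite -subr_ge0 (_ : _ - _ = (u - v) ^+ 2) ?sqr_ge0 //; ring.
rewrite sum_cut_sym mulr_sumr; apply: ler_sum => i _; rewrite mulr_sumr; apply: ler_sum => j _.
case: (bdot c i != bdot c j); rewrite /= ?mulr1n ?mulr0n //.
exact: mulr_ge0 (ler0n _ 2) (sqr_ge0 _).
Qed.

Lemma moment_cut_form c : (0 < k)%N ->
  \sum_(y : input k) cut_form c y ^+ (2 * k) <=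
  (4 * k)%:R ^+ k * ((4 * k)%:R ^+ k * #|{: input k}|%:R * cut_var c ^+ k).
Proof.
(* Khintchine in the variables y_j with c.j = 1, whose coefficients depend on the
   y_i with c.i = 0 only; then Khintchine again for each coefficient. *)
move=> k_gt0; apply: le_trans (khintchine (@cut_coef_toggle c) k) _.
apply: ler_wpM2l; first exact: exprn_ge0.
pose f j y := if bdot c j then cut_coef c j y ^+ 2 else 0.
pose S j := if bdot c j then \sum_(i | ~~ bdot c i) (edge_bias i j + edge_bias j i) ^+ 2 else 0.
have -> : cut_var c = \sum_j S j by rewrite /cut_var big_mkcond.
have var_f y : rad_var [pred j | bdot c j] (cut_coef c) y = \sum_j f j y.
  by rewrite /rad_var big_mkcond.
rewrite (eq_bigr _ (fun y _ => congr1 (fun v => v ^+ k) (var_f y))).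
apply: minkowski_moment => // [j y|j|j]; rewrite /f /S; case: (bdot c j) => //.
- exact: sqr_ge0.
- by apply: sumr_ge0 => i _; apply: sqr_ge0.
- rewrite (eq_bigr _ (fun y _ => esym (exprM _ 2 k))).
  have := khintchine (P := [pred i | ~~ bdot c i]) (s := fun i _ => edge_bias i j + edge_bias j i)
    (fun _ _ _ _ => erefl) k.
  by rewrite /rad_var sumr_const -mulrA mulr_natl => /le_trans; apply.
- by rewrite expr0n gtn_eqF // mulr0 big1.
Qed.

Local Notation hm_bound :=
  (8 * Num.sqrt ((2 ^ k)%:R) * k%:R / ((2 ^ k)%:R - 1) : R).

Lemma hm_bound_ge0 : 0 <= hm_bound.
Proof.
rewrite divr_ge0 ?mulr_ge0 ?sqrtr_ge0 // subr_ge0 ler1n.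
by rewrite -{1}(expn0 2) leq_exp2l.
Qed.

Lemma moment_shifted_cut_form c (a : input k -> bits k) : (0 < k)%N ->
  \sum_x cut_form c (xorf x (parity (a x))) ^+ (2 * k) <=
  (2 ^ k)%:R * ((4 * k)%:R ^+ k * ((4 * k)%:R ^+ k * #|{: input k}|%:R *
    (2 * (#|pmatchings k|%:R ^+ 2 / ((2 ^ k)%:R - 1))) ^+ k)).
Proof.
move=> k_gt0; have Q2k_ge0 y : 0 <= cut_form c y ^+ (2 * k).
  by rewrite exprM exprn_ge0 ?sqr_ge0.
apply: le_trans (sum_shift_le (@parity k) a Q2k_ge0) _.
rewrite card_bits; apply: ler_wpM2l; first exact: ler0n.
apply: le_trans (moment_cut_form c k_gt0) _; apply: ler_wpM2l; first exact: exprn_ge0.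
apply: ler_wpM2l; first by rewrite mulr_ge0 ?exprn_ge0.
apply: lerXn2r; rewrite ?nnegrE.
- by apply: sumr_ge0 => j _; apply: sumr_ge0 => i _; apply: sqr_ge0.
- by rewrite mulr_ge0 ?divr_ge0 ?sqr_ge0 ?ltW ?exp2_sub1_gt0.
- exact: le_trans (cut_var_le c) (ler_wpM2l (ler0n _ 2) (sum_sqr_edge_bias_le k_gt0)).
Qed.

Lemma sum_abs_shifted_cut_form_le c (a : input k -> bits k) : (0 < k)%N ->
  \sum_x `|cut_form c (xorf x (parity (a x)))| <=
  hm_bound * (#|{: input k}|%:R * #|pmatchings k|%:R).
Proof.
move=> k_gt0; set n : R := (2 ^ k)%:R; set nX : R := #|{: input k}|%:R.
set nM : R := #|pmatchings k|%:R; set K : R := (4 * k)%:R.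
set W := 2 * (nM ^+ 2 / (n - 1)); set E := \sum_x `|_|.
have k2_gt0 : (0 < 2 * k)%N by rewrite muln_gt0.
have n1_gt0 : 0 < n - 1 := exp2_sub1_gt0 k_gt0.
have W_ge0 : 0 <= W by rewrite mulr_ge0 ?divr_ge0 ?sqr_ge0 ?ltW.
have moment_le : E ^+ (2 * k) <= (nX ^+ 2 * 2 * K ^+ 2 * W) ^+ k.
  have := sum_abs_expr_le (fun x => cut_form c (xorf x (parity (a x)))) (2 * k).-1.
  rewrite prednK // -/E => /le_trans; apply.
  have eX : nX ^+ (2 * k).-1 * nX = (nX ^+ 2) ^+ k by rewrite -exprSr prednK // exprM.
  have eN : n = 2 ^+ k by rewrite /n natrX.
  have eK : K ^+ k * K ^+ k = (K ^+ 2) ^+ k by rewrite -exprMn.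
  rewrite 3!exprMn -eX -eN -eK [X in _ <= X](_ : _ =
    nX ^+ (2 * k).-1 * (n * (K ^+ k * (K ^+ k * nX * W ^+ k)))); last by ring.
  apply: ler_wpM2l; first exact: exprn_ge0.
  have absX (y : R) : `|y| ^+ (2 * k) = y ^+ (2 * k) by rewrite !exprM real_normK ?num_real.
  by rewrite (eq_bigr _ (fun x _ => absX _)); apply: moment_shifted_cut_form.
rewrite -(ler_pXn2r k2_gt0) ?nnegrE ?sumr_ge0 //; last first.
  by rewrite mulr_ge0 ?hm_bound_ge0 // mulr_ge0.
apply: le_trans moment_le _; rewrite exprM.
apply: lerXn2r; rewrite ?nnegrE ?sqr_ge0 //.
  by apply: mulr_ge0 W_ge0; rewrite !mulr_ge0 ?sqr_ge0.
have n1_neq0 : n - 1 != 0 by rewrite gt_eqF.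
set C := 64 * k%:R ^+ 2 * nX ^+ 2 * nM ^+ 2.
have -> : nX ^+ 2 * 2 * K ^+ 2 * W = C / (n - 1) by rewrite /K /W /C natrM; field.
have -> : (hm_bound * (nX * nM)) ^+ 2 = C * n / (n - 1) ^+ 2.
  by rewrite -/n !exprMn exprVn sqr_sqrtr ?ler0n // /C; field.
rewrite -subr_ge0 (_ : _ - _ = C / (n - 1) ^+ 2) ?divr_ge0 ?sqr_ge0 //; last by field.
by rewrite /C !mulr_ge0 ?sqr_ge0.
Qed.

Lemma sum_shifted_bias_form_le (a : input k -> bits k) : (0 < k)%N ->
  \sum_x bias_form (xorf x (parity (a x))) <=
  2 * (hm_bound * (#|{: input k}|%:R * #|pmatchings k|%:R)).
Proof.
move=> k_gt0; have n_gt0 : 0 < (2 ^ k)%:R :> R by rewrite ltr0n expn_gt0.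
have biasE y : bias_form y = 2 * ((2 ^ k)%:R^-1 * \sum_c cut_form c y).
  apply: (mulfI (lt0r_neq0 n_gt0)); rewrite -sum_cut_form mulrCA mulVKf ?lt0r_neq0 //.
  by rewrite mulr_natl.
rewrite (eq_bigr _ (fun x _ => biasE _)) -mulr_sumr ler_wpM2l // -mulr_sumr exchange_big /=.
rewrite mulrC ler_pdivrMr //; apply: le_trans (ler_sum _ (fun c _ =>
  le_trans (ler_sum _ (fun x _ => ler_norm _)) (sum_abs_shifted_cut_form_le c a k_gt0))) _.
by rewrite sumr_const card_bits [X in _ <= X]mulr_natr.
Qed.

Lemma deterministic_winprob_le (a : input k -> bits k) : (0 < k)%N ->
  (\sum_(x : input k) \sum_(M | is_pmatching M) (hm_win x (a x) (bob M).1 (bob M).2)%:R)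
    / (#|{: input k}| * #|[pred M : {ffun bits k -> bits k} | is_pmatching M]|)%:R
  <= 2^-1 + hm_bound.
Proof.
move=> k_gt0; set nX : R := #|{: input k}|%:R; set nM : R := #|pmatchings k|%:R.
have -> : #|[pred M : {ffun bits k -> bits k} | is_pmatching M]| = #|pmatchings k|.
  by apply: eq_card => M; rewrite !inE.
rewrite natrM -/nX -/nM (eq_bigr _ (fun x _ => sum_hm_win x (a x))) -mulr_sumr big_split /=.
have -> : \sum_(x : input k) nM = nX * nM by rewrite sumr_const mulr_natl.
have := sum_shifted_bias_form_le a k_gt0; rewrite -/nX -/nM.
have [->|nM_neq0] := eqVneq nM 0.
  by rewrite !mulr0 invr0 mulr0 addr_ge0 ?invr_ge0 ?ler0n ?hm_bound_ge0.
have nX_gt0 : 0 < nX by rewrite ltr0n; apply/card_gt0P; exists [ffun=> false].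
have nXM_gt0 : 0 < nX * nM by rewrite mulr_gt0 // lt0r nM_neq0 ler0n.
rewrite ler_pdivrMr //; lra.
Qed.

End DeterministicStrategy.

Theorem mainTheorem2 (R : rcfType) (k : nat) (k_gt0 : (0 < k)%N)
  (Rnd : finType) (p : Rnd -> R)
  (p_ge0 : forall r, 0 <= p r) (p_sum : \sum_(r : Rnd) p r = 1)
  (A : Rnd -> input k -> bits k)
  (B : Rnd -> {ffun bits k -> bits k} -> (bits k * bits k) * bits k)
  (HB : bob_valid B) :
  hm_winprob p A B <=
    2^-1 + 8 * Num.sqrt ((2 ^ k)%:R) * k%:R / ((2 ^ k)%:R - 1).
Proof.
rewrite /hm_winprob -[X in _ <= X]mul1r -[X in _ <= X * _]p_sum mulr_suml.
apply: ler_sum => r _; apply: ler_wpM2l => //.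
exact (deterministic_winprob_le R (HB r) (A r) k_gt0).
Qed.
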